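(* Let $L\in\mathbb{N}_+$ and $n_0,n_1,\dots,n_L\in\mathbb{N}_+$. Define the binomial bound $$\beta=\big\|B_{n_L}M_{n_{L-1},n_L}\cdots B_{n_1}M_{n_0,n_1}e_{n_0+1}\big\|_1$$ and the Montúfar bound $\mu=\prod_{l=1}^{L}\sum_{j=0}^{\min(n_0,\dots,n_{l-1})}\binom{n_l}{j}$. Then $\beta\le\mu$, and $\beta<\mu$ if and only if there exists $l\in\{1,\dots,L-1\}$ with $n_l<\min(n_0,\dots,n_l)+\min(n_0,\dots,n_{l+1})$.
   Context: $V$ denotes sequences $(v_j)_{j\in\mathbb{N}}$ (indexed from $0$) of nonnegative integers with finite sum; ${\rm e}_k\in V$ has $({\rm e}_k)_j=\delta_{kj}$. Clipping: $\mathrm{cl}_{i^*}(v)_i=v_i$ for $i<i^*$, $\sum_{j\ge i^*}v_j$ for $i=i^*$, $0$ for $i>i^*$. For $n\in\mathbb{N}_+$, $k\in\{0,\dots,n\}$ let $\gamma_{k,n}=\sum_{j=0}^{k}\binom{n}{j}{\rm e}_{n-j}$, and let $B_n\in\mathbb{N}^{(n+1)\times(n+1)}$ be given by $(B_n)_{a,b}=(\mathrm{cl}_{b-1}(\gamma_{b-1,n}))_{a-1}$, $a,b\in\{1,\dots,n+1\}$. For $n,n'\in\mathbb{N}$, the connector matrix $M_{n,n'}\in\mathbb{R}^{(n'+1)\times(n+1)}$ has entries $(M_{n,n'})_{a,b}=\delta_{a,\min(b,n'+1)}$. $e_{n_0+1}\in\mathbb{R}^{n_0+1}$ is the standard unit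 vector with $1$ in the last position; $\|\cdot\|_1$ is the sum of absolute values of entries. *)

From mathcomp Require Import all_boot all_order all_algebra.
Set Implicit Arguments. Unset Strict Implicit. Unset Printing Implicit Defensive.
Import GRing.Theory Num.Theory.

(* Elements of V (finitely supported nat sequences indexed from 0) are
   represented by finite lists; entries beyond the list are 0. *)
Definition V := seq nat.
Definition vat (v : V) (i : nat) : nat := nth 0%N v i.
Definition vadd (u v : V) : V :=
  mkseq (fun i => vat u i + vat v i)%N (maxn (size u) (size v)).
Definition vscale (c : nat) (v : V) : V := map (muln c) v.
Definition ev (k : nat) : V := rcons (nseq k 0%N) 1%N.
Definition clip (istar : nat) (v : V) : V :=
  mkseq (fun i => if (i < istar)%N then vat v i
                  else if i == istar then (\sum_(istar <= j < size v) vat v j)%N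
                  else 0%N) istar.+1.
Definition gamma (k n : nat) : V :=
  \big[vadd/[::]]_(j < k.+1) vscale 'C(n, j) (ev (n - j)).

Local Open Scope ring_scope.
(* B_n, 0-based indices: (B_n)_{a,b} = (cl_b(gamma_{b,n}))_a *)
Definition Bmx (n : nat) : 'M[int]_(n.+1) :=
  \matrix_(a < n.+1, b < n.+1) ((vat (clip b (gamma b n)) a)%:Z).
Definition Mmx (n n' : nat) : 'M[int]_(n'.+1, n.+1) :=
  \matrix_(a < n'.+1, b < n.+1) ((nat_of_ord a == minn b n')%:R).

(* v_0 = e_{n_0+1}; v_l = B_{n_l} M_{n_{l-1},n_l} v_{l-1} *)
Fixpoint bvec (ns : nat -> nat) (l : nat) : 'cV[int]_((ns l).+1) :=
  match l return 'cV[int]_((ns l).+1) with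
  | 0 => delta_mx ord_max 0
  | l'.+1 => Bmx (ns l'.+1) *m Mmx (ns l') (ns l'.+1) *m bvec ns l'
  end.

Definition beta (ns : nat -> nat) (L : nat) : nat :=
  (\sum_(i < (ns L).+1) absz (bvec ns L i ord0))%N.

Definition minpre (ns : nat -> nat) (l : nat) : nat :=
  \big[minn/ns 0%N]_(i < l.+1) ns i.

Definition mu (ns : nat -> nat) (L : nat) : nat :=
  (\prod_(1 <= l < L.+1) \sum_(j < (minpre ns l.-1).+1) 'C(ns l, j))%N.

From mathcomp Require Import all_boot all_order all_algebra.
From mathcomp Require Import zify.
Set Implicit Arguments. Unset Strict Implicit. Unset Printing Implicit Defensive.

(* All vectors v_l have nonnegative entries, v_l is supported on [0, m_l] with
   m_l = min(n_0, ..., n_l), and column b <= n of B_n sums to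
   S(n, b) = sum_(j <= b) C(n, j).  Hence
     ||v_(l+1)||_1 = sum_c v_l(c) S(n_(l+1), min(c, n_(l+1))) <= S(n_(l+1), m_l) ||v_l||_1,
   and iterating gives beta <= mu.  Since S(n, .) increases strictly on [0, n],
   step l is strict iff v_l charges some c < m_(l+1).  Such a c at level l+1
   comes either from one at level l or, through the off-diagonal entry
   n_(l+1) - m_(l+1) of column m_(l+1) of B, from n_(l+1) < m_(l+1) + m_(l+2);
   conversely this inequality makes v_(l+1) charge min(n_(l+1) - m_(l+1), m_(l+1)),
   and level 0 never qualifies. *)

Lemma sum_nat_gt0P (I : finType) (F : I -> nat) :
  reflect (exists i, 0 < F i) (0 < \sum_i F i).
Proof.
rewrite lt0n sum_nat_eq0; apply: (iffP forallPn) => -[i].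
  by rewrite /= -lt0n => ?; exists i.
by rewrite lt0n => ?; exists i.
Qed.

Lemma leq_term_sum (I : finType) (F : I -> nat) i : F i <= \sum_j F j.
Proof. by rewrite (bigD1 i) //= leq_addr. Qed.

Lemma ltn_sumP (I : finType) (F G : I -> nat) : (forall i, F i <= G i) ->
  reflect (exists i, F i < G i) (\sum_i F i < \sum_i G i).
Proof.
move=> leFG; apply: (iffP idP) => [ltFG | [i ltFGi]].
  apply/existsP; apply: contraLR ltFG; rewrite negb_exists => /forallP eqFG.
  rewrite -leqNgt; apply: leq_sum => i _; rewrite leqNgt; exact: eqFG.
rewrite (bigD1 i) //= [X in _ < X](bigD1 i) //=.
by rewrite -addSn leq_add // leq_sum.
Qed.

Lemma vat_vadd u v i : vat (vadd u v) i = vat u i + vat v i.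
Proof.
rewrite /vat /vadd; case: (ltnP i (maxn (size u) (size v))) => [lti | ].
  by rewrite nth_mkseq.
by rewrite geq_max => /andP[leu lev]; rewrite !nth_default ?size_mkseq ?geq_max ?leu.
Qed.

Lemma vat_vscale c v i : vat (vscale c v) i = c * vat v i.
Proof.
rewrite /vat /vscale; case: (ltnP i (size v)) => [ltiv | leiv].
  by rewrite (nth_map 0).
by rewrite !nth_default ?size_map // muln0.
Qed.

Lemma vat_ev k i : vat (ev k) i = (i == k).
Proof. by rewrite /vat /ev nth_rcons size_nseq nth_nseq; case: ltngtP. Qed.

Lemma vat_gamma b n i :
  vat (gamma b n) i = \sum_(j < b.+1) 'C(n, j) * (i == n - j).
Proof.
have vat_nil : vat [::] i = 0 by rewrite /vat nth_nil.
rewrite /gamma (big_morph (vat^~ i) (fun u v => vat_vadd u v i) vat_nil).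
by apply: eq_bigr => j _; rewrite vat_vscale vat_ev.
Qed.

Lemma size_gamma b n : size (gamma b n) = n.+1.
Proof.
rewrite /gamma big_ord_recl /= {1}/vadd size_mkseq size_map size_rcons size_nseq subn0.
apply/maxn_idPl; elim/big_ind: _ => // [u v | j _].
  by rewrite size_mkseq geq_max => -> ->.
by rewrite size_map size_rcons size_nseq ltnS leq_subr.
Qed.

Lemma vat_clip b v a : vat (clip b v) a =
  if a < b then vat v a else if a == b then \sum_(b <= j < size v) vat v j else 0.
Proof.
rewrite /clip /vat; case: (ltnP a b.+1) => [ltab | ltba]; first by rewrite nth_mkseq.
by rewrite nth_default ?size_mkseq // ltnNge ltnW //= gtn_eqF.
Qed.

Lemma sumn_vat s K : size s <= K -> sumn s = \sum_(i < K) vat s i.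
Proof.
elim: s K => [|x s IHs] K leK.
  by rewrite big1 // => i _; rewrite /vat nth_nil.
by case: K leK => // K leK; rewrite big_ord_recl /= (IHs K).
Qed.

Lemma sumn_vadd u v : sumn (vadd u v) = sumn u + sumn v.
Proof.
set K := maxn (size u) (size v).
rewrite (sumn_vat (K := K)) ?size_mkseq // (sumn_vat (leq_maxl _ _ : size u <= K)).
rewrite (sumn_vat (leq_maxr _ _ : size v <= K)) -big_split.
by apply: eq_bigr => i _; rewrite vat_vadd.
Qed.

Lemma sumn_vscale c v : sumn (vscale c v) = c * sumn v.
Proof. by elim: v => [|x v IHv] /=; rewrite ?muln0 // IHv mulnDr. Qed.

Lemma sumn_ev k : sumn (ev k) = 1.
Proof. by elim: k. Qed.

Lemma sumn_clip b v : b <= size v -> sumn (clip b v) = sumn v.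
Proof.
move=> lebv; rewrite (sumn_vat (K := b.+1)) ?size_mkseq // (sumn_vat (leqnn _)).
rewrite big_ord_recr /= vat_clip ltnn eqxx -!(big_mkord xpredT (vat v)).
rewrite [RHS](big_cat_nat _ (n := b)) //=; congr (_ + _).
by rewrite big_mkord; apply: eq_bigr => i _; rewrite vat_clip ltn_ord.
Qed.

Definition binsum n k := \sum_(j < k.+1) 'C(n, j).

Lemma binsum_gt0 n k : 0 < binsum n k.
Proof. by rewrite /binsum big_ord_recl bin0. Qed.

Lemma binsumE n k k' : k <= k' ->
  binsum n k' = binsum n k + \sum_(k.+1 <= j < k'.+1) 'C(n, j).
Proof. by move=> lekk'; rewrite /binsum -!(big_mkord xpredT) (big_cat_nat _ (n := k.+1)). Qed.

Lemma leq_binsum n k k' : k <= k' -> binsum n k <= binsum n k'.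
Proof. by move=> lekk'; rewrite (binsumE n lekk') leq_addr. Qed.

Lemma binsum_minr n k : binsum n (minn k n) = binsum n k.
Proof.
case: (leqP k n) => // ltnk.
rewrite (binsumE n (ltnW ltnk)) big_nat_cond big1 ?addn0 //.
by move=> j /andP[/andP[ltnj _] _]; rewrite bin_small.
Qed.

Lemma ltn_binsum n k k' : k <= n -> (binsum n k < binsum n k') = (k < minn k' n).
Proof.
move=> lekn; rewrite -(binsum_minr n k'); case: (ltnP k (minn k' n)) => [ltkk' | lek'k].
  rewrite (binsumE n (ltnW ltkk')) big_ltn // -[X in X < _]addn0 ltn_add2l.
  by rewrite addn_gt0 bin_gt0 (leq_trans ltkk' (geq_minr _ _)).
by rewrite ltnNge (leq_binsum n lek'k).
Qed.

Lemma sumn_gamma b n : sumn (gamma b n) = binsum n b.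
Proof.
rewrite /gamma (big_morph sumn sumn_vadd (erefl : sumn [::] = 0)).
by apply: eq_bigr => j _; rewrite sumn_vscale sumn_ev muln1.
Qed.

Definition Bentry n b a := vat (clip b (gamma b n)) a.

Lemma sum_Bentry n b : b <= n -> \sum_(a < n.+1) Bentry n b a = binsum n b.
Proof.
move=> lebn; rewrite -sumn_vat ?size_mkseq // sumn_clip ?sumn_gamma //.
by rewrite size_gamma ltnW.
Qed.

Lemma Bentry_gt0_support n b a : 0 < Bentry n b a -> a <= b /\ (a = b \/ n - b <= a).
Proof.
rewrite /Bentry vat_clip; case: (ltnP a b) => [ltab | leba].
  rewrite vat_gamma => /sum_nat_gt0P[j]; rewrite muln_gt0 lt0b => /andP[_ /eqP eqa].
  by split; [exact: ltnW | right; rewrite eqa leq_sub2l // -ltnS].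
by case: eqP => // ->; split; [|left].
Qed.

Lemma Bentry_diag_gt0 n b : b <= n -> 0 < Bentry n b b.
Proof.
move=> lebn; rewrite /Bentry vat_clip ltnn eqxx size_gamma.
rewrite (big_cat_nat _ (n := n)) // big_nat1 /= -addnC ltn_addr // vat_gamma.
by apply: leq_trans (leq_term_sum _ ord0); rewrite bin0 subn0 eqxx.
Qed.

Lemma Bentry_low_gt0 n b : b <= n -> 0 < Bentry n b (minn (n - b) b).
Proof.
move=> lebn; case: (ltnP (n - b) b) => [ltnbb | _]; last exact: Bentry_diag_gt0.
rewrite /Bentry vat_clip ltnbb vat_gamma.
by apply: leq_trans (leq_term_sum _ ord_max); rewrite /= eqxx muln1 bin_gt0.
Qed.

(* [Mmx n n'] maps [e_c] to [e_(minn c n')], so column [c] of [Bmx n' *m Mmx n n']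
   is column [minn c n'] of [Bmx n']. *)
Fixpoint hist (ns : nat -> nat) (l : nat) : nat -> nat :=
  match l with
  | 0 => fun a => a == ns 0
  | l.+1 => fun a =>
      \sum_(c < (ns l).+1) Bentry (ns l.+1) (minn c (ns l.+1)) a * hist ns l c
  end.

Section IntegerVectors.
Import GRing.Theory.
Local Open Scope ring_scope.

Lemma sum_mul_eq_nat (m k : nat) (F : nat -> int) : (k < m)%N ->
  \sum_(b < m) F b * (b == k :> nat)%:R = F k.
Proof.
by move=> ltkm; under eq_bigr do rewrite mulr_natr mulrb; rewrite -big_mkcond big_ord1_eq ltkm.
Qed.

Lemma bvecS ns l (a : 'I_(ns l.+1).+1) : bvec ns l.+1 a ord0 =
  \sum_(c < (ns l).+1) (Bentry (ns l.+1) (minn c (ns l.+1)) a)%:Z * bvec ns l c ord0.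
Proof.
rewrite /= mxE; apply: eq_bigr => c _; rewrite mxE; congr (_ * _).
under eq_bigr do rewrite !mxE.
by rewrite (sum_mul_eq_nat (fun b => (Bentry _ b a)%:Z)) // ltnS geq_minr.
Qed.

Lemma bvecE ns l (a : 'I_(ns l).+1) : bvec ns l a ord0 = (hist ns l a)%:Z.
Proof.
elim: l a => [|l IHl] a.
  rewrite /= mxE; case: eqP => [-> | neqa]; rewrite /= ?eqxx //.
  by case: eqP => // eqa; case: neqa; exact: val_inj.
rewrite bvecS /= (big_morph Posz PoszD (erefl (Posz 0))).
by apply: eq_bigr => c _; rewrite IHl PoszM.
Qed.

End IntegerVectors.

Lemma beta_hist ns L : beta ns L = \sum_(a < (ns L).+1) hist ns L a.
Proof. by apply: eq_bigr => a _; rewrite bvecE. Qed.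

Lemma big_minn_idx (I : Type) (r : seq I) (F : I -> nat) x a :
  \big[minn/minn a x]_(i <- r) F i = minn (\big[minn/x]_(i <- r) F i) a.
Proof.
elim: r => [|i r IHr]; first by rewrite !big_nil minnC.
by rewrite !big_cons IHr minnA.
Qed.

Lemma minpre0 ns : minpre ns 0 = ns 0.
Proof. by rewrite /minpre -(big_mkord xpredT) big_nat1_id minnn. Qed.

Lemma minpreS ns l : minpre ns l.+1 = minn (minpre ns l) (ns l.+1).
Proof.
rewrite /minpre -!(big_mkord xpredT) /index_iota !subn0 -addn1 iotaD cats1.
by rewrite big_rcons_op big_minn_idx.
Qed.

Lemma minpre_le ns l : minpre ns l <= ns l.
Proof. by case: l => [|l]; rewrite ?minpre0 // minpreS geq_minr. Qed.

Lemma mu0 ns : mu ns 0 = 1.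
Proof. by rewrite /mu big_geq. Qed.

Lemma muS ns l : mu ns l.+1 = mu ns l * binsum (ns l.+1) (minpre ns l).
Proof. by rewrite /mu big_nat_recr. Qed.

Lemma ltn_mul_chainP x y p s : x <= s * y -> y <= p -> 0 < s ->
  x < p * s <-> y < p \/ x < s * y.
Proof.
move=> lexy leyp s_gt0; rewrite mulnC; split => [ltxp | [ltyp | ltxy]].
- have [ltyp | lepy] := ltnP y p; first by left.
  have eqyp : y = p by apply/anti_leq; rewrite leyp lepy.
  by right; rewrite eqyp.
- by apply: leq_ltn_trans lexy _; rewrite ltn_pmul2l.
- by apply: leq_trans ltxy _; rewrite leq_pmul2l.
Qed.

Section BinomialBound.
Variable ns : nat -> nat.
Local Notation m := (minpre ns).
Local Notation v := (hist ns).

Definition hnorm l := \sum_(a < (ns l).+1) v l a.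

Definition deficient l := exists c, 0 < v l c /\ c < m l.+1.

Lemma hist_support l a : 0 < v l a -> a <= m l.
Proof.
elim: l a => [|l IHl] a /=; first by rewrite minpre0 lt0b => /eqP->.
move=> /sum_nat_gt0P[c]; rewrite muln_gt0 => /andP[/Bentry_gt0_support[leac _] /IHl lecm].
apply: leq_trans leac _; rewrite minpreS leq_min geq_minr andbT.
exact: leq_trans (geq_minl _ _) lecm.
Qed.

Lemma hnorm0 : hnorm 0 = 1.
Proof.
rewrite /hnorm (bigD1 ord_max) //= eqxx big1 // => a neqa.
by case: eqP => // eqa; case/eqP: neqa; exact: val_inj.
Qed.

Lemma hnormS l :
  hnorm l.+1 = \sum_(c < (ns l).+1) v l c * binsum (ns l.+1) (minn c (ns l.+1)).
Proof.
rewrite /hnorm /= exchange_big; apply: eq_bigr => c _ /=.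
by rewrite -big_distrl sum_Bentry ?geq_minr // mulnC.
Qed.

Lemma hist_binsum_leq l c :
  v l c * binsum (ns l.+1) (minn c (ns l.+1)) <= binsum (ns l.+1) (m l) * v l c.
Proof.
rewrite mulnC; have [-> | v_gt0] := posnP (v l c); first by rewrite muln0.
rewrite leq_mul2r leq_binsum ?orbT //.
exact: leq_trans (geq_minl _ _) (hist_support v_gt0).
Qed.

Lemma hist_binsum_ltn l c :
  (v l c * binsum (ns l.+1) (minn c (ns l.+1)) < binsum (ns l.+1) (m l) * v l c)
  = (0 < v l c) && (c < m l.+1).
Proof.
rewrite mulnC ltn_mul2r ltn_binsum ?geq_minr // minpreS.
case: (ltnP c (ns l.+1)) => [//| lenc].
by rewrite !ltnNge geq_minr (leq_trans (geq_minr _ _) lenc).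
Qed.

Lemma hnormS_leq l : hnorm l.+1 <= binsum (ns l.+1) (m l) * hnorm l.
Proof. by rewrite hnormS /hnorm big_distrr leq_sum // => c _; apply: hist_binsum_leq. Qed.

Lemma hnormS_ltnP l : hnorm l.+1 < binsum (ns l.+1) (m l) * hnorm l <-> deficient l.
Proof.
have leq_terms (c : 'I_(ns l).+1) := hist_binsum_leq l c.
rewrite hnormS /hnorm big_distrr; split.
  case/(ltn_sumP leq_terms) => c; rewrite hist_binsum_ltn => /andP[v_gt0 ltc].
  by exists c.
move=> [c [v_gt0 ltc]]; apply/(ltn_sumP leq_terms).
have ltcn : c < (ns l).+1 by rewrite ltnS (leq_trans (hist_support v_gt0)) ?minpre_le.
by exists (Ordinal ltcn); rewrite hist_binsum_ltn v_gt0.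
Qed.

Lemma hnorm_leq_mu l : hnorm l <= mu ns l.
Proof.
elim: l => [|l IHl]; first by rewrite hnorm0 mu0.
rewrite muS mulnC; apply: leq_trans (hnormS_leq l) _.
by rewrite leq_mul2l IHl orbT.
Qed.

Lemma hnorm_ltn_muP l : hnorm l < mu ns l <-> exists2 k, k < l & deficient k.
Proof.
elim: l => [|l IHl]; first by rewrite hnorm0 mu0; split => // -[].
rewrite muS (ltn_mul_chainP (hnormS_leq l) (hnorm_leq_mu l) (binsum_gt0 _ _)).
rewrite IHl hnormS_ltnP; split => [[[k ltkl defk] | defl] | [k]].
- by exists k => //; apply: ltnW.
- by exists l.
- by rewrite ltnS leq_eqVlt => /orP[/eqP-> | ltkl] defk; [right | left; exists k].
Qed.

Lemma hist_top l : 0 < v l (m l).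
Proof.
elim: l => [|l IHl] /=; first by rewrite minpre0 eqxx.
have ltm : m l < (ns l).+1 by rewrite ltnS minpre_le.
apply: leq_trans (leq_term_sum _ (Ordinal ltm)); rewrite /= muln_gt0 IHl andbT.
by rewrite -minpreS Bentry_diag_gt0 // minpre_le.
Qed.

Lemma hist_low l : 0 < v l.+1 (minn (ns l.+1 - m l.+1) (m l.+1)).
Proof.
have ltm : m l < (ns l).+1 by rewrite ltnS minpre_le.
apply: leq_trans (leq_term_sum _ (Ordinal ltm)); rewrite /= muln_gt0 hist_top andbT.
by rewrite -minpreS Bentry_low_gt0 // minpre_le.
Qed.

Lemma deficient0 : ~ deficient 0.
Proof.
move=> [c [/= /[!lt0b] /eqP-> ltc]].
by move: ltc; rewrite minpreS minpre0 ltn_min ltnn.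
Qed.

Lemma deficientS l : deficient l.+1 -> deficient l \/ ns l.+1 < m l.+1 + m l.+2.
Proof.
move=> [c [/= /sum_nat_gt0P[d] /[!muln_gt0] /andP[Bgt0 v_gt0] ltc]].
have [ltd | led] := ltnP d (m l.+1); first by left; exists d.
(* Otherwise the column [minn d (ns l.+1)] is squeezed to [m l.+1] and, as
   [c < m l.+2 <= m l.+1], the entry is off the diagonal: [ns l.+1 - m l.+1 <= c]. *)
right; have [lecd Bsupp] := Bentry_gt0_support Bgt0.
have := hist_support v_gt0; have := minpreS ns l; have := minpreS ns l.+1.
have := minpre_le ns l.+1; lia.
Qed.

Lemma deficient_of_gap l : ns l.+1 < m l.+1 + m l.+2 -> deficient l.+1.
Proof.
move=> gap; exists (minn (ns l.+1 - m l.+1) (m l.+1)); split; first exact: hist_low.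
have := minpre_le ns l.+1; have := minpreS ns l.+1; lia.
Qed.

Lemma deficient_gap l : deficient l ->
  exists2 k, 0 < k <= l & ns k < m k + m k.+1.
Proof.
elim: l => [/deficient0 // | l IHl /deficientS[/IHl[k /andP[k_gt0 lekl] gap] | gap]].
  by exists k; rewrite ?k_gt0 ?(leqW lekl).
by exists l.+1; rewrite ?leqnn.
Qed.

Lemma deficientP L : (exists2 k, k < L & deficient k) <->
  exists l, [/\ 1 <= l, l <= L.-1 & ns l < m l + m l.+1].
Proof.
split=> [[k ltkL /deficient_gap[l /andP[l_gt0 lelk] gap]] | [[|l] [//= _ lelL gap]]].
  by exists l; split=> //; rewrite -ltnS prednK ?(leq_ltn_trans lelk) //; case: L ltkL.
by exists l.+1; [case: L lelL | exact: deficient_of_gap].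
Qed.

End BinomialBound.

Theorem mainTheorem12 (L : nat) (ns : nat -> nat) :
  (0 < L)%N -> (forall l, (l <= L)%N -> (0 < ns l)%N) ->
  (beta ns L <= mu ns L)%N /\
  ((beta ns L < mu ns L)%N <->
   exists l, [/\ (1 <= l)%N, (l <= L.-1)%N &
                 (ns l < minpre ns l + minpre ns l.+1)%N]).
Proof.
move=> _ _; rewrite beta_hist -/(hnorm ns L); split; first exact: hnorm_leq_mu.
by rewrite hnorm_ltn_muP; apply: deficientP.
Qed.
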